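(* Let $V$ be a commutative unital quantale whose underlying lattice is a frame and in which $k=\top$. Let $(X,a)$, $(Y,b)$ be $V$-groups, $\varphi\colon Y\to\mathrm{Aut}(X)$ a group action, and $c$ a $V$-category structure on $X\rtimes_\varphi Y$ such that $(X,a)\xrightarrow{\langle 1,0\rangle}(X\rtimes_\varphi Y,c)\underset{\langle 0,1\rangle}{\overset{\pi_2}{\rightleftarrows}}(Y,b)$ is a split extension in $\mathsf{VGrp}$. Then $a\otimes b\le c\le\mathrm{lex}$ (pointwise), where $(a\otimes b)((x,y),(x',y'))=a(x,x')\otimes b(y,y')$ and $\mathrm{lex}((x,y),(x',y'))$ equals $a(x,x')$ if $y=y'$ and $b(y,y')$ if $y\neq y'$.
   Context: A commutative unital quantale $V$ is a complete lattice with a commutative associative operation $\otimes$ with unit $k$ preserving arbitrary joins in each variable. A $V$-category $(X,a)$: $a\colon X\times X\to V$ with $k\le a(x,x)$ and $a(x,x')\otimes a(x',x'')\le a(x,x'')$; a $V$-functor is a map $f$ with $a(x,x')\le b(f(x),f(x'))$. A $V$-group $(X,a,+)$ is a $V$-category with a group structure (additive, not necessarily abelian) such that $a(x_1,x_2)\otimes a(x_1',x_2')\le a(x_1+x_1',x_2+x_2')$; $V$-homomorphisms are group homomorphisms that are $V$-functors; category $\mathsf{VGrp}$ (pointed since $k=\top$). The semidirect product $X\rtimes_\varphi Y$ is $X\times Y$ with $(x,y)+(x',y')=(x+\varphi_y(x'),y+y')$, $\varphi_y=\varphi(y)$; $\langle 1,0\rangle(x)=(x,0)$, $\langle 0,1\rangle(y)=(0,y)$,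 $\pi_2(x,y)=y$. A split extension in $\mathsf{VGrp}$ means: the middle object is a $V$-group, all three maps are $V$-homomorphisms, $\pi_2\circ\langle 0,1\rangle=1_Y$, and $\langle 1,0\rangle$ is a kernel of $\pi_2$ in $\mathsf{VGrp}$ (so $a(x,x')=c((x,0),(x',0))$). *)

From Stdlib Require Import ClassicalEpsilon.

Set Implicit Arguments.

Record quantale := Quantale {
  qcar :> Type;
  qle : qcar -> qcar -> Prop;
  qsup : (qcar -> Prop) -> qcar;
  qtens : qcar -> qcar -> qcar;
  qk : qcar;
  qle_refl : forall u, qle u u;
  qle_trans : forall u v w, qle u v -> qle v w -> qle u w;
  qle_anti : forall u v, qle u v -> qle v u -> u = v;
  qsup_ub : forall (S : qcar -> Prop) u, S u -> qle u (qsup S);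
  qsup_least : forall (S : qcar -> Prop) w,
      (forall u, S u -> qle u w) -> qle (qsup S) w;
  qtens_comm : forall u v, qtens u v = qtens v u;
  qtens_assoc : forall u v w, qtens u (qtens v w) = qtens (qtens u v) w;
  qtens_unit : forall u, qtens qk u = u;
  qtens_supl : forall (S : qcar -> Prop) u,
      qtens (qsup S) u = qsup (fun z => exists s, S s /\ z = qtens s u);
  qtens_supr : forall (S : qcar -> Prop) u,
      qtens u (qsup S) = qsup (fun z => exists s, S s /\ z = qtens u s)
}.

Arguments qle {q} _ _.
Arguments qsup {q} _.
Arguments qtens {q} _ _.

Definition qtop (V : quantale) : V := @qsup V (fun _ : V => True).

Definition qmeet (V : quantale) (u v : V) : V :=
  qsup (fun w => qle w u /\ qle w v).

Arguments qmeet {V} _ _.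

Definition is_frame (V : quantale) : Prop :=
  forall (u : V) (S : V -> Prop),
    qmeet u (qsup S) = qsup (fun z => exists s, S s /\ z = qmeet u s).

Record grp_ops (X : Type) := GrpOps {
  gzero : X;
  gadd : X -> X -> X;
  gopp : X -> X
}.

Arguments gzero {X} _.
Arguments gadd {X} _ _ _.
Arguments gopp {X} _ _.

Definition is_group (X : Type) (G : grp_ops X) : Prop :=
  (forall x y z, gadd G x (gadd G y z) = gadd G (gadd G x y) z) /\
  (forall x, gadd G (gzero G) x = x) /\
  (forall x, gadd G x (gzero G) = x) /\
  (forall x, gadd G (gopp G x) x = gzero G) /\
  (forall x, gadd G x (gopp G x) = gzero G).

Definition is_group_hom (X Y : Type) (GX : grp_ops X) (GY : grp_ops Y)
  (f : X -> Y) : Prop :=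
  forall x x', f (gadd GX x x') = gadd GY (f x) (f x').

(* phi : Y -> Aut(X) is a group homomorphism (a group action by automorphisms) *)
Definition is_action (X Y : Type) (GX : grp_ops X) (GY : grp_ops Y)
  (phi : Y -> X -> X) : Prop :=
  (forall y, is_group_hom GX GX (phi y)) /\
  (forall y, exists psi : X -> X,
      (forall x, psi (phi y x) = x) /\ (forall x, phi y (psi x) = x)) /\
  (forall y y' x, phi (gadd GY y y') x = phi y (phi y' x)) /\
  (forall x, phi (gzero GY) x = x).

Definition is_Vcat (V : quantale) (X : Type) (a : X -> X -> V) : Prop :=
  (forall x, qle (qk V) (a x x)) /\
  (forall x x' x'', qle (qtens (a x x') (a x' x'')) (a x x'')).

Arguments is_Vcat {V X} _.

Definition is_Vfunctor (V : quantale) (X Y : Type) (a : X -> X -> V)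
  (b : Y -> Y -> V) (f : X -> Y) : Prop :=
  forall x x', qle (a x x') (b (f x) (f x')).

Arguments is_Vfunctor {V X Y} _ _ _.

Definition is_Vgroup (V : quantale) (X : Type) (G : grp_ops X)
  (a : X -> X -> V) : Prop :=
  is_Vcat a /\ is_group G /\
  (forall x1 x2 x1' x2',
      qle (qtens (a x1 x2) (a x1' x2')) (a (gadd G x1 x1') (gadd G x2 x2'))).

Arguments is_Vgroup {V X} _ _.

Definition is_Vhom (V : quantale) (X Y : Type) (GX : grp_ops X) (a : X -> X -> V)
  (GY : grp_ops Y) (b : Y -> Y -> V) (f : X -> Y) : Prop :=
  is_group_hom GX GY f /\ is_Vfunctor a b f.

Arguments is_Vhom {V X Y} _ _ _ _ _.

Definition sd_ops (X Y : Type) (GX : grp_ops X) (GY : grp_ops Y)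
  (phi : Y -> X -> X) : grp_ops (X * Y) :=
  GrpOps (gzero GX, gzero GY)
    (fun p q => (gadd GX (fst p) (phi (snd p) (fst q)), gadd GY (snd p) (snd q)))
    (fun p => (phi (gopp GY (snd p)) (gopp GX (fst p)), gopp GY (snd p))).

Definition inj1 (X Y : Type) (GY : grp_ops Y) (x : X) : X * Y := (x, gzero GY).
Definition inj2 (X Y : Type) (GX : grp_ops X) (y : Y) : X * Y := (gzero GX, y).
Definition pi2 (X Y : Type) (p : X * Y) : Y := snd p.

(** k : A -> B is a kernel of q : B -> C in VGrp (which is pointed, the zero
    morphisms being the constant-zero maps) *)
Definition is_kernel_VGrp (V : quantale) (A B C : Type)
  (GA : grp_ops A) (a : A -> A -> V) (GB : grp_ops B) (bb : B -> B -> V)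
  (GC : grp_ops C) (k : A -> B) (q : B -> C) : Prop :=
  is_Vhom GA a GB bb k /\
  (forall x, q (k x) = gzero GC) /\
  (forall (Z : Type) (GZ : grp_ops Z) (d : Z -> Z -> V),
      is_Vgroup GZ d ->
      forall f : Z -> B, is_Vhom GZ d GB bb f ->
      (forall z, q (f z) = gzero GC) ->
      exists! g : Z -> A, is_Vhom GZ d GA a g /\ (forall z, k (g z) = f z)).

Arguments is_kernel_VGrp {V A B C} _ _ _ _ _ _ _.

Definition is_split_ext (V : quantale) (X Y : Type) (GX : grp_ops X)
  (GY : grp_ops Y) (phi : Y -> X -> X) (a : X -> X -> V) (b : Y -> Y -> V)
  (c : X * Y -> X * Y -> V) : Prop :=
  let G := sd_ops GX GY phi in
  is_Vgroup G c /\
  is_Vhom GX a G c (@inj1 X Y GY) /\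
  is_Vhom G c GY b (@pi2 X Y) /\
  is_Vhom GY b G c (@inj2 X Y GX) /\
  (forall y : Y, pi2 (inj2 GX y) = y) /\
  is_kernel_VGrp GX a G c GY (@inj1 X Y GY) (@pi2 X Y).

Arguments is_split_ext {V X Y} _ _ _ _ _ _.

Definition lex (V : quantale) (X Y : Type) (a : X -> X -> V) (b : Y -> Y -> V)
  (p q : X * Y) : V :=
  if excluded_middle_informative (snd p = snd q) then a (fst p) (fst q)
  else b (snd p) (snd q).

Arguments lex {V X Y} _ _ _ _.

Definition tens_str (V : quantale) (X Y : Type) (a : X -> X -> V)
  (b : Y -> Y -> V) (p q : X * Y) : V :=
  qtens (a (fst p) (fst q)) (b (snd p) (snd q)).


Arguments tens_str {V X Y} _ _ _ _.

(* The two bounds come from writing elements of the semidirect product as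
   (x, y) = (x, 0) + (0, y) and (x, y) + (0, -y) = (x, 0).  Tensoring the
   V-functoriality of <1,0> and <0,1> and using that c is compatible with the
   group law gives a(x,x') (x) b(y,y') <= c.  For the upper bound: when y <> y'
   the V-functor pi2 gives c <= b; when y = y', translating by (0, -y) (which
   costs nothing, since k <= c((0,-y),(0,-y))) gives c((x,y),(x',y)) <=
   c((x,0),(x',0)), and the universal property of the kernel <1,0> forces the
   restriction of c along <1,0> to lie below a. *)

From Stdlib Require Import ClassicalEpsilon.

Set Implicit Arguments.

Lemma qtens_monol (V : quantale) (u v w : V) :
  qle u v -> qle (qtens u w) (qtens v w).
Proof.
  intros Huv.
  assert (Hsup : qsup (fun z => z = u \/ z = v) = v).
  { apply qle_anti.
    - apply qsup_least. intros z [-> | ->]; [exact Huv | apply qle_refl].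
    - apply qsup_ub. now right. }
  rewrite <- Hsup, qtens_supl. apply qsup_ub. exists u. split; [now left | reflexivity].
Qed.

Lemma qtens_mono (V : quantale) (u v u' v' : V) :
  qle u v -> qle u' v' -> qle (qtens u u') (qtens v v').
Proof.
  intros Huv Huv'. apply qle_trans with (qtens v u').
  - now apply qtens_monol.
  - rewrite (qtens_comm _ v u'), (qtens_comm _ v v'). now apply qtens_monol.
Qed.

Lemma qle_tens_unitr (V : quantale) (u v : V) :
  qle (qk V) v -> qle u (qtens u v).
Proof.
  intros Hkv. rewrite <- (qtens_unit _ u) at 1. rewrite qtens_comm.
  apply qtens_mono; [apply qle_refl | exact Hkv].
Qed.

Lemma group_hom0 (X Y : Type) (GX : grp_ops X) (GY : grp_ops Y) (f : X -> Y) :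
  is_group GX -> is_group GY -> is_group_hom GX GY f -> f (gzero GX) = gzero GY.
Proof.
  intros [_ [HX0l _]] [HYa [HY0l [_ [HYNl _]]]] Hf.
  assert (Hidem : gadd GY (f (gzero GX)) (f (gzero GX)) = f (gzero GX)).
  { now rewrite <- Hf, HX0l. }
  transitivity (gadd GY (gopp GY (f (gzero GX)))
                 (gadd GY (f (gzero GX)) (f (gzero GX)))).
  - now rewrite HYa, HYNl, HY0l.
  - now rewrite Hidem, HYNl.
Qed.

Lemma Vgroup_pullback (V : quantale) (A B : Type) (GA : grp_ops A)
    (GB : grp_ops B) (bb : B -> B -> V) (k : A -> B) :
  is_Vgroup GB bb -> is_group GA -> is_group_hom GA GB k ->
  is_Vgroup GA (fun x x' => bb (k x) (k x')).
Proof.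
  intros [[Hrefl Htrans] [_ Hcompat]] HGA Hk.
  split; [split | split]; auto.
  intros x1 x2 x1' x2'. rewrite !Hk. apply Hcompat.
Qed.

(* Injectivity of [k] forces the factorisation of [k] through itself to be the identity. *)
Lemma kernel_VGrp_initial (V : quantale) (A B C : Type)
    (GA : grp_ops A) (a : A -> A -> V) (GB : grp_ops B) (bb : B -> B -> V)
    (GC : grp_ops C) (k : A -> B) (q : B -> C) :
  is_group GA -> is_Vgroup GB bb ->
  is_kernel_VGrp GA a GB bb GC k q ->
  (forall x x', k x = k x' -> x = x') ->
  forall x x', qle (bb (k x) (k x')) (a x x').
Proof.
  intros HGA Hbb [[Hk_hom _] [Hqk Huniv]] Hk_inj x x'.
  set (d := fun x x' => bb (k x) (k x')).
  assert (Hk_Vhom : is_Vhom GA d GB bb k).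
  { split; [exact Hk_hom | intros ? ?; apply qle_refl]. }
  destruct (Huniv A GA d (Vgroup_pullback Hbb HGA Hk_hom) k Hk_Vhom Hqk)
    as [g [[[_ Hg] Hkg] _]].
  specialize (Hg x x'). unfold d in Hg.
  now rewrite (Hk_inj _ _ (Hkg x)), (Hk_inj _ _ (Hkg x')) in Hg.
Qed.

Section SplitExtension.

Variables (V : quantale) (X Y : Type) (GX : grp_ops X) (GY : grp_ops Y).
Variables (phi : Y -> X -> X) (a : X -> X -> V) (b : Y -> Y -> V).
Variable c : X * Y -> X * Y -> V.

Hypothesis hGX : is_group GX.
Hypothesis hGY : is_group GY.
Hypothesis hphi : is_action GX GY phi.
Hypothesis hsplit : is_split_ext GX GY phi a b c.

Let G := sd_ops GX GY phi.

Lemma action_zero (y : Y) : phi y (gzero GX) = gzero GX.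
Proof. destruct hphi as [Hhom _]. exact (group_hom0 hGX hGX (Hhom y)). Qed.

Lemma sd_add_inj1_inj2 (x : X) (y : Y) :
  gadd G (inj1 GY x) (inj2 GX y) = (x, y).
Proof.
  destruct hGX as [_ [_ [HX0r _]]]. destruct hGY as [_ [HY0l _]].
  unfold G, inj1, inj2; simpl. now rewrite action_zero, HX0r, HY0l.
Qed.

Lemma sd_add_inj2_opp (x : X) (y : Y) :
  gadd G (x, y) (inj2 GX (gopp GY y)) = inj1 GY x.
Proof.
  destruct hGX as [_ [_ [HX0r _]]]. destruct hGY as [_ [_ [_ [_ HYNr]]]].
  unfold G, inj1, inj2; simpl. now rewrite action_zero, HX0r, HYNr.
Qed.

Lemma c_compat (p1 p2 p1' p2' : X * Y) :
  qle (qtens (c p1 p2) (c p1' p2')) (c (gadd G p1 p1') (gadd G p2 p2')).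
Proof. destruct hsplit as [[_ [_ Hcompat]] _]. apply Hcompat. Qed.

Lemma tens_str_le_c (p q : X * Y) : qle (tens_str a b p q) (c p q).
Proof.
  destruct hsplit as [_ [[_ Hinj1] [_ [[_ Hinj2] _]]]].
  destruct p as [x y], q as [x' y']. unfold tens_str; simpl.
  rewrite <- (sd_add_inj1_inj2 x y), <- (sd_add_inj1_inj2 x' y').
  eapply qle_trans; [apply qtens_mono; [apply Hinj1 | apply Hinj2] |].
  apply c_compat.
Qed.

Lemma c_le_a_fibre (x x' : X) (y : Y) : qle (c (x, y) (x', y)) (a x x').
Proof.
  destruct hsplit as [[[Hrefl _] _] [_ [_ [_ [_ Hker]]]]].
  eapply qle_trans; [apply qle_tens_unitr, (Hrefl (inj2 GX (gopp GY y))) |].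
  eapply qle_trans; [apply c_compat |].
  rewrite !sd_add_inj2_opp.
  apply (kernel_VGrp_initial hGX (proj1 hsplit) Hker).
  intros ? ? Heq. now injection Heq.
Qed.

Lemma c_le_lex (p q : X * Y) : qle (c p q) (lex a b p q).
Proof.
  destruct hsplit as [_ [_ [[_ Hpi2] _]]].
  destruct p as [x y], q as [x' y']. unfold lex; simpl.
  destruct (excluded_middle_informative (y = y')) as [<- | _].
  - apply c_le_a_fibre.
  - apply (Hpi2 (x, y) (x', y')).
Qed.

End SplitExtension.

Theorem proposition7p6 (V : quantale) (hframe : is_frame V)
  (hk : qk V = qtop V)
  (X Y : Type) (GX : grp_ops X) (GY : grp_ops Y)
  (a : X -> X -> V) (b : Y -> Y -> V)
  (ha : is_Vgroup GX a) (hb : is_Vgroup GY b)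
  (phi : Y -> X -> X) (hphi : is_action GX GY phi)
  (c : X * Y -> X * Y -> V)
  (hsplit : is_split_ext GX GY phi a b c) :
  forall p q : X * Y,
    qle (tens_str a b p q) (c p q) /\ qle (c p q) (lex a b p q).
Proof.
  destruct ha as [_ [hGX _]], hb as [_ [hGY _]].
  intros p q. split.
  - exact (tens_str_le_c hGX hGY hphi hsplit p q).
  - exact (c_le_lex hGX hGY hphi hsplit p q).
Qed.
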